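(* Let $X$ be a finite-dimensional simplicial complex satisfying: (1) for all vertices $x,y$ of $X$, $\Sigma_x\subseteq\Sigma_y$ implies $x=y$; (2) if $K$ is a simplex of $X$ and $x$ is a vertex of $X$ with $x\notin K$, then there is a maximal simplex $L$ of $X$ with $K\subseteq L$ and $x\notin L$. Then the map $\Omega\colon\mathrm{Aut}(X)\to\mathrm{Aut}(\mathcal{N}(X))$, $\Omega(\varphi)=\varphi_*$, is surjective.
   Context: For a vertex $x$ of $X$, $\Sigma_x$ is the collection of maximal simplices of $X$ containing $x$. $\mathcal{N}(X)$ is the nerve of the collection of maximal simplices of $X$ (vertices: maximal simplices of $X$; a finite set of them is a simplex iff their common intersection is non-empty). For $\varphi\in\mathrm{Aut}(X)$ (simplicial automorphisms), $\varphi_*$ is the simplicial automorphism of $\mathcal{N}(X)$ given on vertices by $\varphi_*(K)=\varphi(K)$. *)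

From Stdlib Require Import List.

Definition subset {V : Type} (A B : V -> Prop) : Prop := forall x, A x -> B x.

Definition finite_pred {V : Type} (A : V -> Prop) : Prop :=
  exists l : list V, forall x, A x -> In x l.

Definition nonempty {V : Type} (A : V -> Prop) : Prop := exists x, A x.

Definition image {V W : Type} (f : V -> W) (A : V -> Prop) : W -> Prop :=
  fun w => exists v, A v /\ f v = w.

(* An abstract simplicial complex with vertex set the whole type V:
   simplices are finite nonempty sets, closed under nonempty subsets,
   and every vertex spans a 0-simplex. *)
Definition simplicial_complex {V : Type} (X : (V -> Prop) -> Prop) : Prop :=
  (forall s, X s -> finite_pred s /\ nonempty s) /\
  (forall s t, X s -> subset t s -> nonempty t -> X t) /\
  (forall v : V, X (fun x => x = v)).

Definition finite_dimensional {V : Type} (X : (V -> Prop) -> Prop) : Prop :=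
  exists n : nat, forall s, X s ->
    exists l : list V, length l <= n /\ forall x, s x -> In x l.

Definition maximal_simplex {V : Type} (X : (V -> Prop) -> Prop) (K : V -> Prop) : Prop :=
  X K /\ forall L, X L -> subset K L -> subset L K.

(* Sigma_x : maximal simplices containing x; Sigma_x ⊆ Sigma_y *)
Definition Sigma_sub {V : Type} (X : (V -> Prop) -> Prop) (x y : V) : Prop :=
  forall K, maximal_simplex X K -> K x -> K y.

Definition simplicial_aut {V : Type} (X : (V -> Prop) -> Prop) (f : V -> V) : Prop :=
  (exists g : V -> V, (forall x, g (f x) = x) /\ (forall x, f (g x) = x)) /\
  (forall s, X s <-> X (image f s)).

(* Vertices of the nerve: maximal simplices of X. *)
Definition MaxSimp {V : Type} (X : (V -> Prop) -> Prop) : Type :=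
  { K : V -> Prop | maximal_simplex X K }.

Definition nerve {V : Type} (X : (V -> Prop) -> Prop) : (MaxSimp X -> Prop) -> Prop :=
  fun S => finite_pred S /\ nonempty S /\
           exists v : V, forall K : MaxSimp X, S K -> proj1_sig K v.

(* For a vertex x, the simplices psi K with x in K form a family in which one
   member is finite and every finite subfamily has a common vertex (the K
   themselves form a simplex of the nerve, and psi preserves nerve simplices);
   hence the whole family has a common vertex phi x.  Doing the same for the
   inverse of psi gives gam, and gam (phi x) lies in every maximal simplex
   containing x, so condition (1) forces gam (phi x) = x, and symmetrically.
   By condition (2) every simplex lies in a maximal one, which phi carries into
   a simplex. *)
From Stdlib Require Import List Classical ClassicalEpsilon.

Lemma list_choice {A B : Type} (R : A -> B -> Prop) (l : list A) :
  (forall a, In a l -> exists b, R a b) ->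
  exists bs, forall a, In a l -> exists b, In b bs /\ R a b.
Proof.
  induction l as [|a l IH]; intros H.
  - exists nil; intros a [].
  - destruct (H a (or_introl eq_refl)) as [b Hb].
    destruct IH as [bs Hbs]; [intros a' Ha'; apply H; now right|].
    exists (b :: bs); intros a' [<-|Ha'].
    + exists b; split; [now left|exact Hb].
    + destruct (Hbs a' Ha') as [b' [Hin Hb']]; exists b'; split; [now right|exact Hb'].
Qed.

Lemma finite_intersection_property {I B : Type} (F : I -> B -> Prop) (i0 : I) :
  finite_pred (F i0) ->
  (forall is : list I, exists b, forall i, In i is -> F i b) ->
  exists b, forall i, F i b.
Proof.
  intros [l Hl] Hfin; apply NNPP; intros Hempty.
  assert (Hmiss : forall b, In b l -> exists i, ~ F i b).
  { intros b _; apply not_all_ex_not; intros Hall; apply Hempty; now exists b. }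
  destruct (list_choice _ l Hmiss) as [is His].
  destruct (Hfin (i0 :: is)) as [b Hb].
  destruct (His b (Hl b (Hb i0 (or_introl eq_refl)))) as [i [Hi Hnot]].
  exact (Hnot (Hb i (or_intror Hi))).
Qed.

Lemma simplicial_aut_inv_simplex {A : Type} (Y : (A -> Prop) -> Prop) (f g : A -> A) :
  simplicial_complex Y ->
  (forall x, f (g x) = x) ->
  (forall s, Y s <-> Y (image f s)) ->
  forall s, Y s -> Y (image g s).
Proof.
  intros [Hfin [Hcl _]] fg Hf s Hs; apply Hf.
  apply (Hcl s); [exact Hs| |].
  - intros w [v [[u [Hu <-]] <-]]; now rewrite fg.
  - destruct (proj2 (Hfin s Hs)) as [u Hu].
    exists (f (g u)); exists (g u); split; [now exists u|reflexivity].
Qed.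

Lemma simplex_of_image_simplex {A : Type} (Y : (A -> Prop) -> Prop) (f g : A -> A) :
  simplicial_complex Y ->
  (forall x, g (f x) = x) ->
  (forall t, Y t -> Y (image g t)) ->
  forall s, Y (image f s) -> Y s.
Proof.
  intros [Hfin [Hcl _]] gf Hg s Hs.
  apply (Hcl (image g (image f s))); [now apply Hg| |].
  - intros v Hv; exists (f v); split; [now exists v|apply gf].
  - destruct (proj2 (Hfin _ Hs)) as [w [v [Hv _]]]; now exists v.
Qed.

Section Nerve.

Variables (V : Type) (X : (V -> Prop) -> Prop).
Hypothesis HX : simplicial_complex X.

Lemma maximal_simplex_nonempty (K : MaxSimp X) : nonempty (proj1_sig K).
Proof. exact (proj2 (proj1 HX _ (proj1 (proj2_sig K)))). Qed.

Lemma nerve_simplicial_complex : simplicial_complex (nerve X).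
Proof.
  split; [|split].
  - intros S [Hfin [Hne _]]; now split.
  - intros S T [[l Hl] [_ [v Hv]]] HTS HT; split; [|split; [exact HT|]].
    + exists l; intros K HK; now apply Hl, HTS.
    + exists v; intros K HK; now apply Hv, HTS.
  - intros K; split; [exists (K :: nil); intros K' ->; now left|split].
    + now exists K.
    + destruct (maximal_simplex_nonempty K) as [v Hv].
      exists v; intros K' ->; exact Hv.
Qed.

Hypothesis Hmax : forall (K : V -> Prop) (x : V), X K -> ~ K x ->
  exists L, maximal_simplex X L /\ subset K L /\ ~ L x.

Lemma simplex_sub_maximal (K : V -> Prop) :
  X K -> exists L, maximal_simplex X L /\ subset K L.
Proof.
  intros HK; destruct (classic (exists x, ~ K x)) as [[x Hx]|Hfull].
  - destruct (Hmax K x HK Hx) as [L [HL [HKL _]]]; now exists L.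
  - exists K; split; [split; [exact HK|]|intros x Hx; exact Hx].
    intros L _ _ x _; apply NNPP; intros Hx; apply Hfull; now exists x.
Qed.

Lemma vertex_in_maximal (x : V) : exists K : MaxSimp X, proj1_sig K x.
Proof.
  destruct (simplex_sub_maximal _ (proj2 (proj2 HX) x)) as [L [HL HxL]].
  exists (exist _ L HL); now apply HxL.
Qed.

Lemma nerve_map_common_vertex (f : MaxSimp X -> MaxSimp X) :
  (forall S, nerve X S -> nerve X (image f S)) ->
  forall x, exists y, forall K : MaxSimp X, proj1_sig K x -> proj1_sig (f K) y.
Proof.
  intros Hf x; destruct (vertex_in_maximal x) as [K0 HK0].
  set (F := fun K : {K : MaxSimp X | proj1_sig K x} => proj1_sig (f (proj1_sig K))).
  destruct (finite_intersection_property F (exist _ K0 HK0)) as [y Hy].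
  - exact (proj1 (proj1 HX _ (proj1 (proj2_sig (f K0))))).
  - intros Ks; set (l := map (@proj1_sig _ _) (exist _ K0 HK0 :: Ks)).
    assert (Hl : nerve X (fun K => In K l)).
    { split; [now exists l|split; [exists K0; now left|exists x]].
      intros K HK; apply in_map_iff in HK.
      destruct HK as [[K' HK'] [<- _]]; exact HK'. }
    destruct (Hf _ Hl) as [_ [_ [y Hy]]]; exists y.
    intros K HK; apply Hy; exists (proj1_sig K); split; [|reflexivity].
    apply in_map; now right.
  - exists y; intros K HK; exact (Hy (exist _ K HK)).
Qed.

(* For a simplicial automorphism [phi], [carried f phi] amounts to [phi_* = f]. *)
Definition carried (f : MaxSimp X -> MaxSimp X) (phi : V -> V) : Prop :=
  forall (x : V) (K : MaxSimp X), proj1_sig K x -> proj1_sig (f K) (phi x).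

Lemma exists_carried (f : MaxSimp X -> MaxSimp X) :
  (forall S, nerve X S -> nerve X (image f S)) ->
  exists phi, carried f phi.
Proof. intros Hf; exact (choice _ (nerve_map_common_vertex f Hf)). Qed.

Lemma carried_image_simplex (f : MaxSimp X -> MaxSimp X) (phi : V -> V) :
  carried f phi -> forall s, X s -> X (image phi s).
Proof.
  intros Hphi s Hs; destruct (simplex_sub_maximal s Hs) as [L [HL HsL]].
  set (K := f (exist _ L HL)).
  apply (proj1 (proj2 HX) (proj1_sig K)); [exact (proj1 (proj2_sig K))| |].
  - intros w [v [Hv <-]]; apply Hphi; now apply HsL.
  - destruct (proj2 (proj1 HX s Hs)) as [v Hv]; exists (phi v); now exists v.
Qed.

Hypothesis Hsep : forall x y : V, Sigma_sub X x y -> x = y.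

Lemma carried_cancel (f g : MaxSimp X -> MaxSimp X) (phi gam : V -> V) :
  carried f phi -> carried g gam -> (forall K, g (f K) = K) ->
  forall x, gam (phi x) = x.
Proof.
  intros Hphi Hgam gf x; symmetry; apply Hsep.
  intros K HK Kx.
  pose proof (Hgam _ _ (Hphi x (exist _ K HK) Kx)) as Hx.
  now rewrite gf in Hx.
Qed.

End Nerve.

Theorem proposition3p9 (V : Type) (X : (V -> Prop) -> Prop) :
  simplicial_complex X ->
  finite_dimensional X ->
  (forall x y : V, Sigma_sub X x y -> x = y) ->
  (forall (K : V -> Prop) (x : V), X K -> ~ K x ->
     exists L, maximal_simplex X L /\ subset K L /\ ~ L x) ->
  forall psi : MaxSimp X -> MaxSimp X,
    simplicial_aut (nerve X) psi ->
    exists phi : V -> V,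
      simplicial_aut X phi /\
      forall K : MaxSimp X, forall v : V,
        proj1_sig (psi K) v <-> image phi (proj1_sig K) v.
Proof.
  intros HX _ Hsep Hmax psi [[g [gpsi psig]] Hpsi].
  pose proof (simplicial_aut_inv_simplex _ _ _ (nerve_simplicial_complex _ _ HX) psig Hpsi) as Hg.
  destruct (exists_carried _ _ HX Hmax psi (fun S => proj1 (Hpsi S))) as [phi Hphi].
  destruct (exists_carried _ _ HX Hmax g Hg) as [gam Hgam].
  pose proof (carried_cancel _ _ Hsep _ _ _ _ Hphi Hgam gpsi) as gam_phi.
  pose proof (carried_cancel _ _ Hsep _ _ _ _ Hgam Hphi psig) as phi_gam.
  assert (Hback : forall K v, proj1_sig (psi K) (phi v) -> proj1_sig K v).
  { intros K v Hv; rewrite <- (gpsi K), <- (gam_phi v); now apply Hgam. }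
  exists phi; split; [split|].
  - now exists gam.
  - intros s; split; [apply (carried_image_simplex _ _ HX Hmax psi phi Hphi)|].
    apply (simplex_of_image_simplex _ _ _ HX gam_phi).
    exact (carried_image_simplex _ _ HX Hmax g gam Hgam).
  - intros K v; split.
    + intros Hv; exists (gam v); split; [apply Hback; now rewrite phi_gam|apply phi_gam].
    + intros [u [Hu <-]]; now apply Hphi.
Qed.
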